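(* Let $\Omega$ be a compact Hausdorff space and let $\Gamma$ be a group acting minimally on $\Omega$ by homeomorphisms. Suppose that some element $g\in\Gamma$ has an attracting fixed point in $\Omega$. Then there is an integer $n$ such that for any nonempty open subsets $U_1,\dots,U_n$ of $\Omega$ there exist $t_1,\dots,t_n\in\Gamma$ with $t_1U_1\cup\dots\cup t_nU_n=\Omega$ (i.e. the action is $n$-filling).
   Context: An element $g\in\Gamma$ has an attracting fixed point $x\in\Omega$ if $gx=x$ and there exists a neighbourhood $V_x$ of $x$ such that $\lim_{n\to\infty}g^n(V_x)=\{x\}$ (i.e. for every neighbourhood $W$ of $x$, $g^n(V_x)\subset W$ for all sufficiently large $n$). *)

From mathcomp Require Import all_boot all_order all_algebra.
From mathcomp Require Import all_classical all_reals all_analysis.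
Set Implicit Arguments. Unset Strict Implicit. Unset Printing Implicit Defensive.
Local Open Scope classical_set_scope.

Definition is_group (G : Type) (mul : G -> G -> G) (one : G) (inv : G -> G) : Prop :=
  [/\ forall a b c, mul a (mul b c) = mul (mul a b) c,
      forall a, mul one a = a,
      forall a, mul a one = a,
      forall a, mul (inv a) a = one
    & forall a, mul a (inv a) = one].

(* A (left) action of the group on T by homeomorphisms: each act g is
   continuous; it is then a homeomorphism with inverse act (inv g). *)
Definition is_action_by_homeos (G : Type) (mul : G -> G -> G) (one : G)
    (T : topologicalType) (act : G -> T -> T) : Prop :=
  [/\ forall x, act one x = x,
      forall g h x, act (mul g h) x = act g (act h x)
    & forall g, continuous (act g)].

Definition minimal_action (G : Type) (T : topologicalType) (act : G -> T -> T) : Prop :=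
  forall x : T, closure [set act g x | g in [set: G]] = [set: T].

Definition attracting_fixed_point (G : Type) (T : topologicalType)
    (act : G -> T -> T) (g : G) (x : T) : Prop :=
  act g x = x /\
  exists V : set T, nbhs x V /\
    forall W : set T, nbhs x W ->
      exists N : nat, forall n : nat, (N <= n)%N -> iter n (act g) @` V `<=` W.

Definition n_filling (G : Type) (T : topologicalType) (act : G -> T -> T) (n : nat) : Prop :=
  forall U : 'I_n -> set T, (forall i, open (U i) /\ U i !=set0) ->
    exists t : 'I_n -> G, \bigcup_(i in [set: 'I_n]) (act (t i) @` U i) = [set: T].

(** The translates of a neighbourhood V of the attracting point x cover
    Omega by minimality, hence finitely many do, say n, by compactness.
    Conversely every nonempty open U can be moved onto a set containing V:
    some k carries x into U by minimality, so k^-1 U is a neighbourhood of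
    x, and a large power g^N squeezes V into it.  Moving each U_i onto V
    and then onto the i-th translate of V covers Omega with n sets. *)
From HB Require Import structures.
From mathcomp Require Import all_boot all_order all_algebra.
From mathcomp Require Import all_classical all_reals all_analysis.
From mathcomp Require Import finmap.
Set Implicit Arguments. Unset Strict Implicit. Unset Printing Implicit Defensive.
Local Open Scope classical_set_scope.

(* [compact_cover] is proved for pointed spaces only. *)
Definition pointed_at (T : Type) (t0 : T) := T.
HB.instance Definition _ (T : topologicalType) (t0 : T) :=
  Topological.copy (pointed_at t0) T.
HB.instance Definition _ (T : topologicalType) (t0 : T) :=
  isPointed.Build (pointed_at t0) t0.

Lemma compact_cover_compact (T : topologicalType) (A : set T) :
  compact A -> cover_compact A.
Proof.
have [[t0 _]|T0] := pselect (exists t : T, True); last first.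
  move=> _ I D f _ _; exists fset0 => // t.
  by exfalso; apply: T0; exists t.
change (@compact (pointed_at t0) A -> @cover_compact (pointed_at t0) A).
by rewrite compact_cover.
Qed.

Lemma compact_finite_subcover (T : topologicalType) (I : choiceType)
    (f : I -> set T) :
  compact [set: T] -> (forall i, open (f i)) -> (forall y, exists i, f i y) ->
  exists n (s : 'I_n -> I), forall y, exists k, f (s k) y.
Proof.
move=> cT fopen fcov.
have Tcov : [set: T] `<=` \bigcup_(i in [set: I]) f i.
  by move=> y _; have [i fiy] := fcov y; exists i.
have [D _ Dcov] := compact_cover_compact cT (fun i _ => fopen i) Tcov.
pose s := in_tuple (enum_fset D).
exists (size s), (tnth s) => y.
have [i Di fiy] := Dcov y Logic.I.
have /tnthP [k ik] : i \in s by [].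
by exists k; rewrite -ik.
Qed.

Section GroupAction.
Variables (T : topologicalType) (G : Type).
Variables (mul : G -> G -> G) (one : G) (inv : G -> G) (act : G -> T -> T).
Hypothesis Ggroup : is_group mul one inv.
Hypothesis Gact : is_action_by_homeos mul one act.

Lemma actK h : cancel (act h) (act (inv h)).
Proof.
case: Ggroup Gact => _ _ _ mulVg _ [act1 actM _] y.
by rewrite -actM mulVg act1.
Qed.

Lemma actVK h : cancel (act (inv h)) (act h).
Proof.
case: Ggroup Gact => _ _ _ _ mulgV [act1 actM _] y.
by rewrite -actM mulgV act1.
Qed.

Lemma image_act h (U : set T) : act h @` U = act (inv h) @^-1` U.
Proof.
apply/seteqP; split => y /=; first by case=> u Uu <-; rewrite actK.
by move=> Uy; exists (act (inv h) y); rewrite ?actVK.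
Qed.

Lemma open_image_act h (U : set T) : open U -> open (act h @` U).
Proof.
case: Gact => _ _ act_cont oU; rewrite image_act.
by apply: open_comp => // z _; apply: act_cont.
Qed.

Lemma iter_act g n : iter n (act g) = act (iter n (mul g) one).
Proof.
case: Gact => act1 actM _; apply: funext => y.
elim: n => [|n IHn]; first by rewrite act1.
by rewrite !iterS actM IHn.
Qed.

Hypothesis Gminimal : minimal_action act.

Lemma orbit_meets_open (U : set T) y :
  open U -> U !=set0 -> exists h, U (act h y).
Proof.
move=> oU [z Uz].
have : closure [set act h y | h in [set: G]] z by rewrite Gminimal.
move=> /(_ U (open_nbhs_nbhs (conj oU Uz))) [_ [[h _ <-] Uhy]].
by exists h.
Qed.

Lemma translates_cover (U : set T) y :
  open U -> U !=set0 -> exists h, (act h @` U) y.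
Proof.
move=> oU U0; have [h Uhy] := orbit_meets_open y oU U0.
by exists (inv h), (act h y); rewrite ?actK.
Qed.

Lemma finite_translates_cover (x : T) (V : set T) :
  compact [set: T] -> nbhs x V ->
  exists n (t : 'I_n -> G), forall y, exists k, (act (t k) @` V) y.
Proof.
move=> cT Vx; have oVo : open V° := @open_interior T V.
have Vo0 : V° !=set0 by exists x.
have /choice [hf hfP] : forall y, exists h, (act h @` V°) y.
  by move=> y; apply: translates_cover.
have hfcov : forall y, exists z, (act (hf z) @` V°) y by move=> y; exists y.
have [n [s scov]] := compact_finite_subcover cT
  (fun z => open_image_act (hf z) oVo) hfcov.
exists n, (hf \o s) => y; have [k [v Vov <-]] := scov y.
by exists k; exists v => //; apply: interior_subset.
Qed.

Lemma attracted_sub_translate g (x : T) (V U : set T) :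
  (forall W, nbhs x W -> exists N, iter N (act g) @` V `<=` W) ->
  open U -> U !=set0 -> exists e, V `<=` act e @` U.
Proof.
move=> attract oU U0.
have [k Ukx] := orbit_meets_open x oU U0.
have nbhs_kU : nbhs x (act (inv k) @` U).
  apply: open_nbhs_nbhs; split; first exact: open_image_act.
  by exists (act k x); rewrite ?actK.
have [N gNV] := attract _ nbhs_kU; rewrite iter_act in gNV.
exists (mul (inv (iter N (mul g) one)) (inv k)) => v Vv.
have [u Uu uE] := gNV _ (ex_intro2 _ _ v Vv erefl).
by exists u => //; case: Gact => _ actM _; rewrite actM uE actK.
Qed.

Lemma n_filling_of_translate_cover n (t : 'I_n -> G) (V : set T) :
  (forall y, exists k, (act (t k) @` V) y) ->
  (forall U, open U -> U !=set0 -> exists e, V `<=` act e @` U) ->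
  n_filling act n.
Proof.
move=> Vcov Vinto U Uopen.
have /choice [e eP] : forall k, exists e, V `<=` act e @` U k.
  by move=> k; have [oU U0] := Uopen k; apply: Vinto.
exists (fun k => mul (t k) (e k)); apply/seteqP; split => // y _.
have [k [v Vv <-]] := Vcov y; have [u Uu <-] := eP k v Vv.
by exists k => //; exists u => //; case: Gact => _ actM _; rewrite actM.
Qed.

End GroupAction.

Theorem proposition2p5 (T : topologicalType) (G : Type)
    (mul : G -> G -> G) (one : G) (inv : G -> G) (act : G -> T -> T) :
  compact [set: T] -> hausdorff_space T ->
  is_group mul one inv ->
  is_action_by_homeos mul one act ->
  minimal_action act ->
  (exists (g : G) (x : T), attracting_fixed_point act g x) ->
  exists n : nat, n_filling act n.
Proof.
move=> cT _ Ggroup Gact Gmin [g [x [_ [V [Vx attract]]]]].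
have [n [t tcov]] := finite_translates_cover Ggroup Gact Gmin cT Vx.
exists n; apply: (n_filling_of_translate_cover Gact tcov) => U.
apply: (attracted_sub_translate Ggroup Gact Gmin (g := g) (x := x)).
by move=> W /attract [N gNV]; exists N; apply: gNV.
Qed.
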